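(* Let $f\equiv 1$ and let $g:(0,1]\to(0,\infty)$ be arbitrary. Then the voting scheme $(f,g)$ is not fair for all sample sizes $k$: there exists $k\ge 1$ such that, with sample size $k$, the fairness condition $v_i=v_{i_1}+v_{i_2}$ fails for some network, node and splitting ratio.
   Context: A network consists of $N$ nodes with weights $m_1,\dots,m_N>0$, $\sum_{i=1}^N m_i=1$. A voting scheme is a pair of functions $(f,g)$ from $(0,1]$ to $(0,\infty)$. In each query round a node samples $k\ge 1$ nodes independently with replacement, node $j$ being chosen with probability $p_j=f(m_j)/\sum_{i=1}^N f(m_i)$; each opinion of node $j$ is weighted by $g_j=g(m_j)$. The voting power of node $i$ is $$v_i=\sum_{\mathbf y\in\mathbb N^N:\ y_1+\dots+y_N=k}\frac{k!}{y_1!\cdots y_N!}\,\frac{y_i g_i}{\sum_{n=1}^N y_n g_n}\prod_{j=1}^N p_j^{y_j},$$ where $\mathbb N=\{0,1,2,\dots\}$. Splitting: node $i$ of weight $m_i$ is replaced by two nodes $i_1,i_2$ of weights $x m_i$ and $(1-x)m_i$, $x\in(0,1)$, all other nodes unchanged; $v_{i_1},v_{i_2}$ denote the voting powers in the new network (with the same $k$). The scheme is fair for sample size $k$ if $v_i=v_{i_1}+v_{i_2}$ for every network, every node $i$ and every $x\in(0,1)$. *)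

From HB Require Import structures.
From mathcomp Require Import all_boot all_order all_algebra.
From mathcomp Require Import reals.
Set Implicit Arguments. Unset Strict Implicit. Unset Printing Implicit Defensive.
Import Order.TTheory GRing.Theory Num.Theory.
Local Open Scope ring_scope.

Section Voting.
Variable R : realType.

Definition prob (f : R -> R) (N : nat) (m : 'I_N -> R) (j : 'I_N) : R :=
  f (m j) / \sum_(i < N) f (m i).

Definition multinom (k N : nat) (y : {ffun 'I_N -> 'I_k.+1}) : R :=
  (k`!)%:R / \prod_(j < N) ((y j)`!)%:R.

(* voting power v_i; the sum ranges over all y in N^N with y_1+...+y_N = k
   (each y_j is then <= k, so y is encoded as a function into 'I_k.+1) *)
Definition vpower (f g : R -> R) (k N : nat) (m : 'I_N -> R) (i : 'I_N) : R :=
  \sum_(y : {ffun 'I_N -> 'I_k.+1} | (\sum_(j < N) (y j : nat))%N == k)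
     multinom y * (((y i : nat)%:R * g (m i)) / \sum_(n < N) (y n : nat)%:R * g (m n))
     * \prod_(j < N) prob f m j ^+ (y j : nat).

(* splitting node i with ratio x: the new network has N+1 nodes; node i
   (as widen_ord) becomes i_1 with weight x m_i, and the new last node
   ord_max is i_2 with weight (1-x) m_i; all other nodes unchanged. *)
Definition split_net (N : nat) (m : 'I_N -> R) (i : 'I_N) (x : R) :
  'I_N.+1 -> R :=
  fun j => match unlift ord_max j with
           | Some j' => if j' == i then x * m i else m j'
           | None => (1 - x) * m i
           end.

Definition node1 (N : nat) (i : 'I_N) : 'I_N.+1 := widen_ord (leqnSn N) i.
Definition node2 (N : nat) : 'I_N.+1 := ord_max.

Definition fair (f g : R -> R) (k : nat) : Prop :=
  forall (N : nat) (m : 'I_N -> R),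
    (forall j, 0 < m j) -> \sum_(j < N) m j = 1 ->
    forall (i : 'I_N) (x : R), 0 < x < 1 ->
      vpower f g k m i =
      vpower f g k (split_net m i x) (node1 i)
      + vpower f g k (split_net m i x) (node2 N).

End Voting.

From HB Require Import structures.
From mathcomp Require Import all_boot all_order all_algebra.
From mathcomp Require Import reals.
From mathcomp Require Import zify lra.
Import Order.TTheory GRing.Theory Num.Theory.
Local Open Scope ring_scope.

(* With sample size k = 1 a query draws a single node j, whose
   opinion then carries the whole weight, so the voting power of node i is
   just its sampling probability: v_i = p_i (provided g(m_i) <> 0).  For
   f = 1 every node is sampled with probability 1/N, hence v_i = 1/N
   regardless of the weights.  Splitting one node of the two-node network
   with weights (1/2, 1/2) at ratio x = 1/2 therefore turns v_i = 1/2 into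
   v_{i_1} + v_{i_2} = 1/3 + 1/3, so (1, g) is not fair for k = 1. *)

Section SampleSizeOne.
Variable R : realType.

Definition unit_sample {N : nat} (j : 'I_N) : {ffun 'I_N -> 'I_2} :=
  [ffun n => if n == j then ord_max else ord0].

Lemma unit_sampleE N (j n : 'I_N) : (unit_sample j n : nat) = (n == j) :> nat.
Proof. by rewrite ffunE; case: eqP. Qed.

Lemma unit_sample_size N (j : 'I_N) :
  (\sum_(n < N) (unit_sample j n : nat))%N = 1%N.
Proof.
rewrite (bigD1 j) //= big1 ?unit_sampleE ?eqxx // => n /negbTE hn.
by rewrite unit_sampleE hn.
Qed.

Definition drawn_node {N : nat} (d : 'I_N) (y : {ffun 'I_N -> 'I_2}) : 'I_N :=
  odflt d [pick n | y n != ord0].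

Lemma drawn_unit_sample N (d j : 'I_N) : drawn_node d (unit_sample j) = j.
Proof.
rewrite /drawn_node; case: pickP => [n | hnone] /=.
  by rewrite ffunE; case: (n =P j) => // _; rewrite eqxx.
by have := hnone j; rewrite ffunE eqxx.
Qed.

Lemma unit_sample_drawn N (d : 'I_N) (y : {ffun 'I_N -> 'I_2}) :
  (\sum_(n < N) (y n : nat))%N == 1%N -> unit_sample (drawn_node d y) = y.
Proof.
move=> /eqP hsize; rewrite /drawn_node.
case: pickP => [j hj | hnone] /=; last first.
  move: hsize; rewrite big1 // => n _.
  by have /negbFE/eqP -> := hnone n.
have hyj : y j = 1%N :> nat.
  have : y j != 0%N :> nat by apply: contra hj => /eqP h; apply/eqP/val_inj.
  by have := ltn_ord (y j); lia.
move: hsize; rewrite (bigD1 j) //= hyj add1n => -[/eqP hrest].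
apply/ffunP => n; rewrite ffunE; apply: val_inj => /=.
case: eqP => [-> // | /eqP hn].
by move: hrest; rewrite sum_nat_eq0 => /forall_inP /(_ n hn) /eqP ->.
Qed.

Lemma sum_size_one_samples N (d : 'I_N) (F : {ffun 'I_N -> 'I_2} -> R) :
  \sum_(y : {ffun 'I_N -> 'I_2} | (\sum_(n < N) (y n : nat))%N == 1%N) F y =
  \sum_(j < N) F (unit_sample j).
Proof.
rewrite (reindex_onto (@unit_sample N) (drawn_node d)); last exact: unit_sample_drawn.
by apply: eq_bigl => j; rewrite unit_sample_size drawn_unit_sample !eqxx.
Qed.

Lemma vpower_size_one (f g : R -> R) N (m : 'I_N -> R) (i : 'I_N) :
  g (m i) != 0 -> vpower f g 1 m i = prob f m i.
Proof.
move=> gi; rewrite /vpower (sum_size_one_samples _ i).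
rewrite (bigD1 i) //= [X in _ + X]big1 ?addr0; last first.
  by move=> j /negbTE hj; rewrite unit_sampleE eq_sym hj !mul0r mulr0 mul0r.
have multinom1 : multinom R (unit_sample i) = 1.
  by rewrite /multinom big1 ?divr1 // => n _; rewrite unit_sampleE; case: (n == i).
have weight_i : \sum_(n < N) (unit_sample i n : nat)%:R * g (m n) = g (m i).
  rewrite (bigD1 i) //= big1 ?addr0 ?unit_sampleE ?eqxx ?mul1r // => n /negbTE hn.
  by rewrite unit_sampleE hn mul0r.
have prob_i : \prod_(j < N) prob f m j ^+ (unit_sample i j : nat) = prob f m i.
  rewrite (bigD1 i) //= big1 ?mulr1 ?unit_sampleE ?eqxx ?expr1 // => n /negbTE hn.
  by rewrite unit_sampleE hn expr0.
by rewrite multinom1 weight_i prob_i unit_sampleE eqxx !mul1r divff // mul1r.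
Qed.

Lemma prob_uniform N (m : 'I_N -> R) (j : 'I_N) :
  prob (fun _ => 1) m j = N%:R^-1.
Proof. by rewrite /prob sumr_const card_ord mul1r. Qed.

Lemma split_net_node1 N (m : 'I_N -> R) (i : 'I_N) x :
  split_net m i x (node1 i) = x * m i.
Proof.
have -> : node1 i = lift ord_max i by apply: val_inj; rewrite /= /bump leqNgt ltn_ord.
by rewrite /split_net liftK eqxx.
Qed.

Lemma split_net_node2 N (m : 'I_N -> R) (i : 'I_N) x :
  split_net m i x (node2 N) = (1 - x) * m i.
Proof. by rewrite /split_net /node2 unlift_none. Qed.

End SampleSizeOne.

Theorem theorem2 (R : realType) (g : R -> R)
  (hg : forall x : R, 0 < x <= 1 -> 0 < g x) :
  exists k : nat, (1 <= k)%N /\ ~ fair (fun _ : R => 1) g k.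
Proof.
exists 1%N; split => // fair1.
pose m : 'I_2 -> R := fun _ => 2^-1.
have g_ne0 (w : R) : 0 < w <= 1 -> g w != 0 by move=> /hg /gt_eqF ->.
have m_pos j : 0 < m j by rewrite invr_gt0.
have m_sum : \sum_(j < 2) m j = 1 by rewrite !big_ord_recr big_ord0 /m /=; lra.
have half_in : 0 < (2 : R)^-1 < 1 by apply/andP; split; lra.
have := fair1 2%N m m_pos m_sum ord0 2^-1 half_in.
rewrite !vpower_size_one ?prob_uniform ?split_net_node1 ?split_net_node2;
  last 3 first.
1-3: by apply: g_ne0; rewrite /m; apply/andP; split; lra.
lra.
Qed.
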